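(* Let $\nu,m_1,m_2,t$ be positive integers with $\nu>m_i\ge t$ for $i\in\{1,2\}$ and $2\nu\ge 2m_1+m_2-t$. Suppose $\mathcal F\subseteq\mathcal P_{m_1}$ and $\mathcal G\subseteq\mathcal P_{m_2}$ are nonempty cross $t$-intersecting families. Then $$|\mathcal F|\le {\tau_t(\mathcal F)\brack t}{m_2-t+1\brack 1}^{\tau_t(\mathcal G)-t}N'(\tau_t(\mathcal G);m_1;2\nu).$$
   Context: Let $q$ be a prime power, $\nu\ge 1$ an integer, and $f$ a non-degenerate alternating bilinear form on $V=\mathbb F_q^{2\nu}$. A subspace $W\le V$ is totally isotropic if $f(x,y)=0$ for all $x,y\in W$. For $0\le m\le \nu$, $\mathcal P_m$ denotes the set of all $m$-dimensional totally isotropic subspaces of $V$. Gaussian binomial coefficient: ${n\brack k}=\prod_{i=0}^{k-1}\frac{q^{n-i}-1}{q^{k-i}-1}$, ${n\brack 0}=1$. For integers $0\le a\le m\le\nu$, $N'(a;m;2\nu)=\prod_{i=1}^{m-a}\frac{q^{2(\nu-m+i)}-1}{q^{i}-1}$; this equals the number of members of $\mathcal P_m$ containing a fixed member of $\mathcal P_a$. Families $\mathcal F\subseteq\mathcal P_{m_1}$, $\mathcal G\subseteq\mathcal P_{m_2}$ are cross $t$-intersecting if $\dim(F\cap G)\ge t$ for all $F\in\mathcal F$, $G\in\mathcal G$. For a family $\mathcal H$ of totally isotropic subspaces, a $t$-cover of $\mathcal H$ is a totally isotropic subspace $X$ with $\dim(X\cap H)\ge t$ for all $H\in\mathcal H$,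 and $\tau_t(\mathcal H)$ is the minimum dimension of a $t$-cover of $\mathcal H$. *)

From HB Require Import structures.
From mathcomp Require Import all_boot all_order all_algebra all_field.
Set Implicit Arguments. Unset Strict Implicit. Unset Printing Implicit Defensive.
Import Order.TTheory GRing.Theory Num.Theory.
Local Open Scope ring_scope.

(* Over a
   finite field we equip the type of subspaces with a finType structure
   (via the injection into matrices), so families of subspaces are
   finite sets {set VS F n}. *)
Definition VS (F : finFieldType) (n : nat) := {vspace 'rV[F]_n}.
HB.instance Definition _ (F : finFieldType) (n : nat) :=
  Countable.copy (VS F n) (can_type (@VectorInternalTheory.vs2mxK F 'rV[F]_n)).
HB.instance Definition _ (F : finFieldType) (n : nat) :=
  Finite.copy (VS F n) (can_type (@VectorInternalTheory.vs2mxK F 'rV[F]_n)).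

Section Symplectic.
Variables (F : finFieldType) (n : nat).
Variable f : 'rV[F]_n -> 'rV[F]_n -> F.

Definition bilinear_form : Prop :=
  (forall (a : F) x x' y, f (a *: x + x') y = a * f x y + f x' y) /\
  (forall (a : F) x y y', f x (a *: y + y') = a * f x y + f x y').

Definition alternating_form : Prop := forall x, f x x = 0.

Definition nondegenerate_form : Prop :=
  forall x, (forall y, f x y = 0) -> x = 0.

Definition nondeg_alternating_bilinear_form : Prop :=
  [/\ bilinear_form, alternating_form & nondegenerate_form].

Definition totally_isotropic (W : VS F n) : bool :=
  [forall x : 'rV[F]_n, forall y : 'rV[F]_n,
     (x \in W) ==> (y \in W) ==> (f x y == 0)].

Definition Pm (m : nat) : {set VS F n} :=
  [set W : VS F n | (\dim W == m)%N && totally_isotropic W].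

Definition cross_t_intersecting (t : nat) (FF GG : {set VS F n}) : Prop :=
  forall A B, A \in FF -> B \in GG -> (t <= \dim (A :&: B))%N.

Definition t_cover (t : nat) (H : {set VS F n}) (X : VS F n) : bool :=
  totally_isotropic X && [forall A in H, (t <= \dim (X :&: A))%N].

(* tau_t(H): minimum dimension of a t-cover of H.  (If H has no t-cover the
   value is the junk default n.+1; this never happens in the theorem below.) *)
Definition tau (t : nat) (H : {set VS F n}) : nat :=
  \big[minn/n.+1]_(X : VS F n | t_cover t H X) \dim X.

End Symplectic.

Definition gauss (q n k : nat) : rat :=
  \prod_(i < k) (((q%:R : rat) ^+ (n - i) - 1) / ((q%:R : rat) ^+ (k - i) - 1)).

Definition Nprime (q a m nu : nat) : rat :=
  \prod_(1 <= i < (m - a).+1)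
     (((q%:R : rat) ^+ (2 * (nu - m + i)) - 1) / ((q%:R : rat) ^+ i - 1)).

From HB Require Import structures.
From mathcomp Require Import all_boot all_order all_algebra all_field.
From mathcomp Require Import zify ring.
Set Implicit Arguments. Unset Strict Implicit. Unset Printing Implicit Defensive.
Import Order.TTheory GRing.Theory Num.Theory.
Local Open Scope ring_scope.

(* Fix a t-cover X of FF of dimension tau_t(FF).  Every A in FF contains a
   t-subspace of X, and there are at most [tau_t(FF), t] of those.  While a
   subspace S of A has dimension below tau_t(GG), it is not a t-cover of GG:
   some G in GG meets S in fewer than t dimensions, hence contains an
   (m2 - t + 1)-space T meeting S trivially.  As dim (A :&: G) >= t, the space
   A :&: G meets T, so S grows inside A by a line of T; choosing T from S alone
   leaves at most [m2 - t + 1, 1] choices per step.  After tau_t(GG) - t steps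
   every A in FF contains one of the resulting tau_t(GG)-dimensional spaces,
   and a totally isotropic space U lies in at most N'(dim U; m1; 2 nu) members
   of P_m1: counting ordered bases, each new vector must lie in the orthogonal
   of the current space, of dimension at most 2 nu minus that of the space. *)

Section SubspaceBasics.
Variables (K : fieldType) (vT : vectType K).

Lemma dimv_add_line (S : {vspace vT}) v :
  v \notin S -> \dim (S + <[v]>) = (\dim S).+1.
Proof.
move=> vS; have v0 : v != 0 by apply: contraNneq vS => ->; rewrite mem0v.
rewrite dimv_disjoint_sum ?dim_vline ?v0 ?addn1 //.
apply/eqP; rewrite -subv0; apply/subvP => u; rewrite memv_cap.
case/andP => uS /vlineP[k def_u]; move: uS; rewrite def_u.
rewrite memv0 scaler_eq0; have [//|k0 kvS] := eqVneq k 0.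
by have := memvZ k^-1 kvS; rewrite scalerK // (negbTE vS).
Qed.

Lemma exists_subv_dim (Y : {vspace vT}) d :
  (d <= \dim Y)%N -> exists2 S : {vspace vT}, (S <= Y)%VS & \dim S = d.
Proof.
elim: d => [|d IH] lt_dY; first by exists 0%VS; rewrite ?sub0v ?dimv0.
have [S SY dS] := IH (ltnW lt_dY).
have /subvPn[v vY vS] : ~~ (Y <= S)%VS.
  by apply: contraTN lt_dY => /dimvS; rewrite -dS -ltnNge ltnS.
by exists (S + <[v]>)%VS; rewrite ?dimv_add_line ?dS // subv_add SY -memvE.
Qed.

End SubspaceBasics.

Lemma natr_le_ratio (N D P : nat) (r : rat) :
  (0 < D)%N -> (N * D <= P)%N -> P%:R / D%:R = r -> N%:R <= r.
Proof. by move=> D_gt0 le_ND <-; rewrite ler_pdivlMr ?ltr0n // -natrM ler_nat. Qed.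

Lemma natr_diff_exp_ratio (q a b c : nat) : (1 < q)%N -> (c <= a)%N -> (c < b)%N ->
  ((q ^ a - q ^ c)%N%:R / (q ^ b - q ^ c)%N%:R : rat) =
  (q%:R ^+ (a - c) - 1) / (q%:R ^+ (b - c) - 1).
Proof.
move=> q_gt1 le_ca lt_cb.
rewrite !natrB ?leq_pexp2l ?(ltnW q_gt1) ?(ltnW lt_cb) // !natrX.
rewrite -[in LHS](subnKC le_ca) -[in LHS](subnKC (ltnW lt_cb)) !exprD.
have qc_neq0 : (q%:R : rat) ^+ c != 0 by rewrite expf_neq0 // pnatr_eq0 -lt0n ltnW.
have qbc_neq1 : (q%:R : rat) ^+ (b - c) - 1 != 0.
  by rewrite subr_eq0 -natrX pnatr_eq1 -(expn0 q) (inj_eq (expnI q_gt1)) subn_eq0 -ltnNge.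
field; by rewrite qbc_neq1 -{2}(mulr1 (_ ^+ c)) -mulrBr mulf_neq0.
Qed.

Lemma exp_sub1_ge0 (q k : nat) : (0 < q)%N -> 0 <= (q%:R : rat) ^+ k - 1.
Proof. by move=> q_gt0; rewrite subr_ge0 exprn_ege1 // ler1n. Qed.

Lemma gauss_ge0 q a k : (0 < q)%N -> 0 <= gauss q a k.
Proof. by move=> q_gt0; apply: prodr_ge0 => i _; rewrite divr_ge0 ?exp_sub1_ge0. Qed.

Lemma Nprime_ge0 q a m nu : (0 < q)%N -> 0 <= Nprime q a m nu.
Proof. by move=> q_gt0; apply: prodr_ge0 => i _; rewrite divr_ge0 ?exp_sub1_ge0. Qed.

Lemma card_bigcup_le (T I : finType) (P : {pred I}) (B : I -> {set T}) :
  (#|\bigcup_(i in P) B i| <= \sum_(i in P) #|B i|)%N.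
Proof.
elim/big_ind2: _ => [|X1 k1 X2 k2 le1 le2|//]; first by rewrite cards0.
by rewrite (leq_trans (leq_card_setU _ _)) ?leq_add.
Qed.

Section Counting.
Variables (F : finFieldType) (n : nat).
Local Notation V := 'rV[F]_n.
Local Notation q := #|F|.

Lemma card_vspace_diff (U W : VS F n) :
  (W <= U)%VS -> #|[predD U & W]| = (q ^ \dim U - q ^ \dim W)%N.
Proof.
move=> WU; rewrite -!card_vspace -(cardID W U) (_ : #|[predI U & W]| = #|W|) ?addKn //.
by apply: eq_card => v; rewrite !inE andb_idl //; apply: (subvP WU).
Qed.

Section HereditaryExtensions.
Variable Q : VS F n -> bool.
Hypothesis Q_sub : forall U U' : VS F n, (U' <= U)%VS -> Q U -> Q U'.

Definition extensions (W : VS F n) k :=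
  [set U : VS F n | [&& (W <= U)%VS, \dim U == (\dim W + k)%N & Q U]].

Definition extending_vectors (U : VS F n) :=
  [set v : V | (v \notin U) && Q (U + <[v]>)%VS].

Variable g : nat -> nat.
Hypothesis card_extending_vectors :
  forall U, Q U -> (#|extending_vectors U| <= g (\dim U))%N.

(* The number of ways to extend a basis of an a-space to a basis of a fixed
   (a + k)-space containing it. *)
Definition basis_extensions (a k : nat) := (\prod_(j < k) (q ^ (a + k) - q ^ (a + j)))%N.

Lemma basis_extensionsS a k :
  basis_extensions a k.+1 = ((q ^ (a + k.+1) - q ^ a) * basis_extensions a.+1 k)%N.
Proof.
rewrite /basis_extensions big_ord_recl addn0; congr (_ * _)%N.
by apply: eq_bigr => j _; rewrite lift0 !addnS !addSn.
Qed.

Lemma basis_extensions_gt0 a k : (0 < basis_extensions a k)%N.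
Proof.
rewrite prodn_gt0 // => j.
by rewrite subn_gt0 ltn_exp2l ?finNzRing_gt1 // ltn_add2l.
Qed.

Lemma mem_extensions_add_line W U k v : U \in extensions W k.+1 ->
  v \in U -> v \notin W ->
  v \in extending_vectors W /\ U \in extensions (W + <[v]>)%VS k.
Proof.
rewrite !inE => /and3P[WU /eqP dU QU] vU vW.
have WvU : (W + <[v]> <= U)%VS by rewrite subv_add WU -memvE.
by rewrite vW (Q_sub WvU QU) WvU QU dU dimv_add_line // addSnnS eqxx.
Qed.

(* Double counting the pairs (U, v) with v in U but not in W. *)
Lemma card_extensions_double_count W k :
  (#|extensions W k.+1| * (q ^ (\dim W + k.+1) - q ^ \dim W) <=
   \sum_(v in extending_vectors W) #|extensions (W + <[v]>)%VS k|)%N.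
Proof.
rewrite -sum_nat_const.
have -> : (\sum_(U in extensions W k.+1) (q ^ (\dim W + k.+1) - q ^ \dim W) =
    \sum_(U in extensions W k.+1) \sum_v ((v \in U) && (v \notin W) : nat))%N.
  apply: eq_bigr => U /[!inE] /and3P[WU /eqP <- _].
  rewrite -card_vspace_diff // -sum1_card big_mkcond /=.
  by apply: eq_bigr => v _; rewrite !inE andbC; case: (_ && _).
rewrite exchange_big /= [leqRHS]big_mkcond /=; apply: leq_sum => v _.
case: ifP => [vW | vNW].
  rewrite -sum1_card [leqRHS]big_mkcond /= big_mkcond /=; apply: leq_sum => U _.
  case: ifP => // UW; case: (boolP (v \in U)) => //= vU.
  case: (boolP (v \in W)) => //= nvW.
  by have [_ ->] := mem_extensions_add_line UW vU nvW.
rewrite big1 // => U UW; case: (boolP (v \in U)) => //= vU.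
case: (boolP (v \in W)) => //= nvW.
by have [] := mem_extensions_add_line UW vU nvW; rewrite vNW.
Qed.

Lemma card_extensions_mul_le k W :
  (#|extensions W k| * basis_extensions (\dim W) k <=
   \prod_(j < k) g (\dim W + j))%N.
Proof.
elim: k W => [|k IH] W.
  rewrite /basis_extensions !big_ord0 muln1 -(cards1 W); apply: subset_leq_card.
  apply/subsetP => U /[!inE] /and3P[WU /eqP dU _].
  have : (W == U :> {vspace V}) by rewrite eqEdim WU dU addn0 leqnn.
  by rewrite eq_sym.
have [QW | QNW] := boolP (Q W); last first.
  suff -> : extensions W k.+1 = set0 by rewrite cards0.
  apply/setP => U; rewrite !inE; apply/negP => /and3P[WU _ QU].
  by rewrite (Q_sub WU QU) in QNW.
rewrite basis_extensionsS mulnA big_ord_recl addn0.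
apply: leq_trans (leq_mul (card_extensions_double_count W k) (leqnn _)) _.
rewrite big_distrl /=.
apply: (@leq_trans (\sum_(v in extending_vectors W) \prod_(j < k) g ((\dim W).+1 + j))).
  apply: leq_sum => v /[!inE] /andP[vW _]; have := IH (W + <[v]>)%VS.
  by rewrite dimv_add_line.
rewrite sum_nat_const leq_mul ?card_extending_vectors //.
by apply/eq_leq/eq_bigr => j _; rewrite /bump leq0n add1n addSnnS.
Qed.

End HereditaryExtensions.

Lemma card_subspaces_le_gauss (X : VS F n) k :
  (#|[set S : VS F n | (S <= X)%VS && (\dim S == k)]|%:R : rat) <=
  gauss q (\dim X) k.
Proof.
have q_gt1 := finNzRing_gt1 F.
have [lt_Xk | le_kX] := ltnP (\dim X) k.
  rewrite (_ : [set _ | _] = set0) ?cards0 ?gauss_ge0 ?(ltnW q_gt1) //.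
  apply/setP => S; rewrite !inE; apply/negP => /andP[/dimvS SX /eqP dS].
  by rewrite dS leqNgt lt_Xk in SX.
pose Q (U : VS F n) := (U <= X)%VS.
have Q_sub (U U' : VS F n) : (U' <= U)%VS -> Q U -> Q U' by apply: subv_trans.
have card_ext (U : VS F n) : Q U ->
    (#|extending_vectors Q U| <= q ^ \dim X - q ^ \dim U)%N.
  rewrite /Q => UX; rewrite -card_vspace_diff //; apply/subset_leq_card/subsetP => v.
  by rewrite !inE subv_add UX -memvE.
have := @card_extensions_mul_le Q Q_sub (fun d => q ^ \dim X - q ^ d)%N card_ext k 0%VS.
rewrite (_ : extensions Q 0%VS k = [set S : VS F n | (S <= X)%VS && (\dim S == k)]);
  last first.
  by apply/setP => S; rewrite !inE /Q /= sub0v dimv0 add0n /= andbC.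
rewrite dimv0 => /(natr_le_ratio (basis_extensions_gt0 _ _)); apply.
rewrite !natr_prod -prodf_div; apply: eq_bigr => j _.
by rewrite !add0n natr_diff_exp_ratio // ltnW // (leq_trans (ltn_ord j) le_kX).
Qed.

End Counting.

Section Isotropy.
Variables (F : finFieldType) (n : nat) (f : 'rV[F]_n -> 'rV[F]_n -> F).
Hypotheses (f_bilinear : bilinear_form f) (f_nondeg : nondegenerate_form f).
Local Notation V := 'rV[F]_n.
Local Notation q := #|F|.

Lemma form_linearl a x x' y : f (a *: x + x') y = a * f x y + f x' y.
Proof. by case: f_bilinear. Qed.

Lemma form_linearr a x y y' : f x (a *: y + y') = a * f x y + f x y'.
Proof. by case: f_bilinear. Qed.

Lemma form_suml I r (P : pred I) (a : I -> F) (b : I -> V) y :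
  f (\sum_(i <- r | P i) a i *: b i) y = \sum_(i <- r | P i) a i * f (b i) y.
Proof.
elim/big_rec2: _ => [|i z s _ <-]; last by rewrite form_linearl.
have /eqP := form_linearl 1 0 0 y.
by rewrite scaler0 addr0 mul1r -subr_eq0 opprD addrA subrr add0r oppr_eq0 => /eqP.
Qed.

Lemma form_sumr I r (P : pred I) (a : I -> F) (b : I -> V) x :
  f x (\sum_(i <- r | P i) a i *: b i) = \sum_(i <- r | P i) a i * f x (b i).
Proof.
elim/big_rec2: _ => [|i z s _ <-]; last by rewrite form_linearr.
have /eqP := form_linearr 1 x 0 0.
by rewrite scaler0 addr0 mul1r -subr_eq0 opprD addrA subrr add0r oppr_eq0 => /eqP.
Qed.

Definition pairing_basisl (U : {vspace V}) (v : V) : 'rV[F]_(\dim U) :=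
  \row_j f (vbasis U)`_j v.

Definition pairing_basisr (U : {vspace V}) (u : V) : 'rV[F]_(\dim U) :=
  \row_j f u (vbasis U)`_j.

Fact pairing_basisl_is_linear U : linear (pairing_basisl U).
Proof. by move=> a v w; apply/rowP => j; rewrite !mxE form_linearr. Qed.
HB.instance Definition _ U :=
  GRing.isLinear.Build F V _ _ (pairing_basisl U) (pairing_basisl_is_linear U).

Fact pairing_basisr_is_linear U : linear (pairing_basisr U).
Proof. by move=> a v w; apply/rowP => j; rewrite !mxE form_linearl. Qed.
HB.instance Definition _ U :=
  GRing.isLinear.Build F V _ _ (pairing_basisr U) (pairing_basisr_is_linear U).

Definition perp (U : {vspace V}) : {vspace V} := lker (linfun (pairing_basisl U)).

Lemma perpP (U : {vspace V}) v : reflect (forall u, u \in U -> f u v = 0) (v \in perp U).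
Proof.
rewrite memv_ker lfunE /=; apply: (iffP eqP) => [pv0 u uU | fUv0].
  rewrite (coord_vbasis uU) form_suml big1 // => j _.
  by have := congr1 (fun M : 'rV_ _ => M 0 j) pv0; rewrite !mxE => ->; rewrite mulr0.
by apply/rowP => j; rewrite !mxE fUv0 // vbasis_mem // memt_nth.
Qed.

(* Nondegeneracy makes u |-> (f u c_j)_j injective on U, for (c_j) a basis of
   a complement of perp U. *)
Lemma dim_perp (U : {vspace V}) : (\dim (perp U) <= n - \dim U)%N.
Proof.
set C := ((perp U)^C)%VS.
have U_ker : (U :&: lker (linfun (pairing_basisr C)) = 0)%VS.
  apply/eqP; rewrite -subv0; apply/subvP => u; rewrite memv_cap memv_ker lfunE /=.
  case/andP => uU /eqP pu0; rewrite memv0; apply/eqP/f_nondeg => y.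
  have : y \in (perp U + C)%VS by rewrite addv_complf memvf.
  case/memv_addP => p /perpP pU [c cC ->].
  rewrite -[p]scale1r form_linearr mul1r pU // add0r (coord_vbasis cC) form_sumr.
  rewrite big1 // => j _.
  by have := congr1 (fun M : 'rV_ _ => M 0 j) pu0; rewrite !mxE => ->; rewrite mulr0.
have := limg_ker_dim (linfun (pairing_basisr C)) U; rewrite U_ker dimv0 add0n => <-.
have dimV : \dim (fullv : {vspace V}) = n by rewrite dimvf dim_matrix mul1r.
have := dimvS (subvf (linfun (pairing_basisr C) @: U)); rewrite dimvf dim_matrix mul1r.
have dimC : \dim C = (n - \dim (perp U))%N by rewrite dimv_compl dimV.
have := dimvS (subvf (perp U)); rewrite dimV.
lia.
Qed.

Lemma totally_isotropicP (W : VS F n) :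
  reflect (forall x y, x \in W -> y \in W -> f x y = 0) (totally_isotropic f W).
Proof.
apply: (iffP forallP) => [iso x y xW yW | iso x].
  by have /forallP/(_ y) := iso x; rewrite xW yW => /eqP.
by apply/forallP => y; apply/implyP => xW; apply/implyP => yW; rewrite iso.
Qed.

Lemma totally_isotropicS (U U' : VS F n) :
  (U' <= U)%VS -> totally_isotropic f U -> totally_isotropic f U'.
Proof.
move=> U'U /totally_isotropicP iso; apply/totally_isotropicP => x y xU yU.
by apply: iso; apply: (subvP U'U).
Qed.

Lemma PmP m (W : VS F n) :
  reflect (\dim W = m /\ totally_isotropic f W) (W \in Pm f m).
Proof. by rewrite inE; apply: (iffP andP) => -[/eqP]. Qed.

Lemma card_isotropic_extending_vectors (U : VS F n) : totally_isotropic f U ->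
  (#|extending_vectors (totally_isotropic f) U| <= q ^ (n - \dim U) - q ^ \dim U)%N.
Proof.
move=> /totally_isotropicP isoU.
have U_perp : (U <= perp U)%VS by apply/subvP => u uU; apply/perpP => x xU; apply: isoU.
apply: (@leq_trans #|[predD perp U & U]|).
  apply/subset_leq_card/subsetP => v /[!inE] /andP[vU /totally_isotropicP isoUv].
  rewrite vU; apply/perpP => u uU; apply: isoUv; first exact: (subvP (addvSl U _)).
  exact: (subvP (addvSr U _) _ (memv_line v)).
rewrite card_vspace_diff // leq_sub2r // leq_pexp2l ?dim_perp //.
exact: ltnW (finNzRing_gt1 F).
Qed.

End Isotropy.

Lemma card_isotropic_extensions_le_Nprime (F : finFieldType) (nu m : nat)
    (f : 'rV[F]_(2 * nu) -> 'rV[F]_(2 * nu) -> F) (S : VS F (2 * nu)) :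
  bilinear_form f -> nondegenerate_form f -> (\dim S <= m <= nu)%N ->
  (#|extensions (totally_isotropic f) S (m - \dim S)|%:R : rat) <=
  Nprime #|F| (\dim S) m nu.
Proof.
move=> f_bilinear f_nondeg /andP[le_Sm le_m_nu].
have := card_extensions_mul_le (@totally_isotropicS _ _ f)
  (g := fun d => #|F| ^ (2 * nu - d) - #|F| ^ d)%N
  (card_isotropic_extending_vectors f_bilinear f_nondeg) (m - \dim S) S.
move/(natr_le_ratio (basis_extensions_gt0 _ _ _)); apply.
rewrite /Nprime /basis_extensions big_add1 /= big_nat_rev big_mkord !natr_prod -prodf_div.
apply: eq_bigr => j _; have lt_j := ltn_ord j.
rewrite natr_diff_exp_ratio ?finNzRing_gt1; try lia.
by congr ((_ ^+ _ - 1) / (_ ^+ _ - 1)); lia.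
Qed.

Section Covers.
Variables (F : finFieldType) (n t : nat) (f : 'rV[F]_n -> 'rV[F]_n -> F).
Variable H : {set VS F n}.

Lemma tau_le_dim X : t_cover f t H X -> (tau f t H <= \dim X)%N.
Proof. by rewrite /tau -minEnat; apply: (@bigmin_le_cond _ nat). Qed.

Lemma tau_attained X0 : t_cover f t H X0 ->
  exists2 X, t_cover f t H X & \dim X = tau f t H.
Proof.
move=> cover_X0; have dim_le (X : VS F n) : (\dim X <= n.+1)%N.
  by have := dimvS (subvf X); rewrite dimvf dim_matrix mul1r => /leqW.
rewrite /tau -minEnat (@bigmin_eq_arg _ nat _ _ _ _ _ cover_X0 (fun X _ => dim_le X)).
by case: arg_minP => // X cover_X _; exists X.
Qed.

End Covers.

Section CrossIntersecting.
Variables (F : finFieldType) (nu m1 m2 t : nat).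
Local Notation n := (2 * nu)%N.
Local Notation q := #|F|.
Variable f : 'rV[F]_n -> 'rV[F]_n -> F.
Variables FF GG : {set VS F n}.
Hypotheses (FF_sub : FF \subset Pm f m1) (GG_sub : GG \subset Pm f m2).
Hypotheses (FF_neq0 : FF != set0) (GG_neq0 : GG != set0).
Hypothesis cross : cross_t_intersecting t FF GG.
Hypothesis le_t_m2 : (t <= m2)%N.
Local Notation tauF := (tau f t FF).
Local Notation tauG := (tau f t GG).
Let q_gt0 : (0 < q)%N := ltnW (finNzRing_gt1 F).

Lemma mem_FF A : A \in FF -> \dim A = m1 /\ totally_isotropic f A.
Proof. by move=> /(subsetP FF_sub) /PmP. Qed.

Lemma mem_GG G : G \in GG -> \dim G = m2 /\ totally_isotropic f G.
Proof. by move=> /(subsetP GG_sub) /PmP. Qed.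

Lemma t_cover_FF G : G \in GG -> t_cover f t FF G.
Proof.
move=> GG_G; rewrite /t_cover (mem_GG GG_G).2; apply/forall_inP => A FF_A.
by rewrite capvC cross.
Qed.

Lemma t_cover_GG A : A \in FF -> t_cover f t GG A.
Proof.
move=> FF_A; rewrite /t_cover (mem_FF FF_A).2; apply/forall_inP => G GG_G.
exact: cross.
Qed.

Lemma tauG_le_m1 : (tauG <= m1)%N.
Proof.
by case/set0Pn: FF_neq0 => A FF_A; rewrite -(mem_FF FF_A).1 tau_le_dim ?t_cover_GG.
Qed.

Lemma t_le_tauG : (t <= tauG)%N.
Proof.
case/set0Pn: FF_neq0 => A FF_A; case/set0Pn: GG_neq0 => G GG_G.
have [Y /andP[_ /forall_inP cover_Y] <-] := tau_attained (t_cover_GG FF_A).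
exact: leq_trans (cover_Y G GG_G) (dimvS (capvSl _ _)).
Qed.

(* The dimension of [T] forces it to meet, inside [G], the at least
   [t]-dimensional space [A :&: G] for every [A] in [FF]. *)
Definition avoiding_slice (S T : VS F n) : bool :=
  [&& [exists G in GG, (T <= G)%VS], \dim T == (m2 - t + 1)%N & (T :&: S == 0)%VS].

Lemma exists_avoiding_slice (S : VS F n) :
  totally_isotropic f S -> (\dim S < tauG)%N -> exists T, avoiding_slice S T.
Proof.
move=> isoS lt_S_tauG.
have /forall_inPn[G GG_G] : ~~ [forall G in GG, t <= \dim (S :&: G)]%N.
  by apply: contraTN lt_S_tauG => cover_S; rewrite -leqNgt tau_le_dim // /t_cover isoS.
rewrite -ltnNge capvC => lt_GS_t.
have := dimv_cap_compl G S; rewrite (mem_GG GG_G).1 => dim_G.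
have /exists_subv_dim[T T_sub dim_T] : (m2 - t + 1 <= \dim (G :\: S))%N by lia.
exists T; apply/and3P; split; last by rewrite -subv0 -(capv_diff G S) capvS.
  by apply/existsP; exists G; rewrite GG_G (subv_trans T_sub (diffvSl _ _)).
by rewrite dim_T.
Qed.

Lemma extend_in_slice (S T A : VS F n) : avoiding_slice S T -> A \in FF ->
  (S <= A)%VS -> exists2 L : VS F n, (L <= T)%VS && (\dim L == 1%N) &
    (S + L <= A)%VS /\ \dim (S + L) = (\dim S).+1.
Proof.
case/and3P => /existsP[G /andP[GG_G T_G]] /eqP dim_T /eqP TS0 FF_A S_A.
have dim_AG := cross FF_A GG_G.
have dim_sum_cap := dimv_sum_cap (A :&: G) T.
have dim_sum : (\dim ((A :&: G) + T) <= m2)%N.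
  by rewrite -(mem_GG GG_G).1 dimvS // subv_add capvSr T_G.
have /exists_subv_dim[L L_sub dim_L] : (1 <= \dim ((A :&: G) :&: T))%N by lia.
have L_T : (L <= T)%VS by apply: subv_trans L_sub (capvSr _ _).
have L_A : (L <= A)%VS by apply: subv_trans L_sub (subv_trans (capvSl _ _) (capvSl _ _)).
exists L; first by rewrite L_T dim_L.
split; first by rewrite subv_add S_A L_A.
rewrite dimv_disjoint_sum ?dim_L ?addn1 //.
by apply/eqP; rewrite -subv0 -TS0 capvC capvS.
Qed.

(* [T] is chosen canonically from [S], so that the number of one-step
   extensions of [S] does not depend on the member of [FF] being covered. *)
Definition line_steps (S : VS F n) : {set VS F n} :=
  if [pick T | avoiding_slice S T] is Some T then
    [set (S + L : VS F n)%VS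
      | L : VS F n in [set L : VS F n | (L <= T)%VS && (\dim L == 1%N)]]
  else set0.

Fixpoint tower (X : VS F n) (j : nat) : {set VS F n} :=
  if j is j'.+1 then \bigcup_(S in tower X j') line_steps S
  else [set S : VS F n | (S <= X)%VS && (\dim S == t)].

Lemma card_line_steps S : (#|line_steps S|%:R : rat) <= gauss q (m2 - t + 1) 1.
Proof.
rewrite /line_steps; case: pickP => [T /and3P[_ /eqP <- _] | _]; last first.
  by rewrite cards0 gauss_ge0.
by apply: le_trans (card_subspaces_le_gauss T 1); rewrite ler_nat leq_imset_card.
Qed.

Lemma card_tower X j :
  (#|tower X j|%:R : rat) <= gauss q (\dim X) t * gauss q (m2 - t + 1) 1 ^+ j.
Proof.
elim: j => [|j IH] /=; first by rewrite expr0 mulr1 card_subspaces_le_gauss.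
apply: le_trans (_ : (\sum_(S in tower X j) #|line_steps S|)%N%:R <= _).
  by rewrite ler_nat card_bigcup_le.
rewrite natr_sum exprS mulrCA mulrC.
apply: le_trans (_ : \sum_(S in tower X j) gauss q (m2 - t + 1) 1 <= _).
  by apply: ler_sum => S _; apply: card_line_steps.
by rewrite sumr_const -mulr_natr mulrC; apply: ler_wpM2l; rewrite ?gauss_ge0.
Qed.

Lemma tower_covers X A j : t_cover f t FF X -> A \in FF ->
  (t + j <= tauG)%N -> exists2 S, S \in tower X j & (S <= A)%VS && (\dim S == t + j)%N.
Proof.
move=> /andP[_ /forall_inP cover_X] FF_A; elim: j => [|j IH] le_j /=.
  have /exists_subv_dim[S S_sub dim_S] := cover_X A FF_A.
  exists S; first by rewrite inE dim_S eqxx andbT (subv_trans S_sub (capvSl _ _)).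
  by rewrite dim_S addn0 eqxx andbT (subv_trans S_sub (capvSr _ _)).
rewrite addnS in le_j; have [S tower_S /andP[S_A /eqP dim_S]] := IH (ltnW le_j).
have isoS : totally_isotropic f S := totally_isotropicS S_A (mem_FF FF_A).2.
have lt_S_tauG : (\dim S < tauG)%N by rewrite dim_S.
have [T0 slice_T0] := exists_avoiding_slice isoS lt_S_tauG.
have [T slice_T pick_T] :
    exists2 T, avoiding_slice S T & [pick T | avoiding_slice S T] = Some T.
  by case: pickP => [T ? | /(_ T0)]; [exists T | rewrite slice_T0].
have [L L_T [SL_A dim_SL]] := extend_in_slice slice_T FF_A S_A.
exists (S + L)%VS; last by rewrite SL_A dim_SL dim_S addnS eqxx.
apply/bigcupP; exists S; rewrite // /line_steps pick_T.
by apply/imsetP; exists L; rewrite ?inE.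
Qed.

Lemma card_FF_le : (m1 <= nu)%N ->
  bilinear_form f -> nondegenerate_form f ->
  (#|FF|%:R : rat) <=
  gauss q tauF t * gauss q (m2 - t + 1) 1 ^+ (tauG - t) * Nprime q tauG m1 nu.
Proof.
move=> le_m1_nu f_bilinear f_nondeg.
have [G0 GG_G0] := set0Pn _ GG_neq0.
have [X cover_X dim_X] := tau_attained (t_cover_FF GG_G0).
pose above S := if \dim S == tauG
  then extensions (totally_isotropic f) S (m1 - \dim S) else set0.
have FF_above : FF \subset \bigcup_(S in tower X (tauG - t)) above S.
  apply/subsetP => A FF_A; have [dim_A iso_A] := mem_FF FF_A.
  have [S tower_S /andP[S_A /eqP dim_S]] :=
    tower_covers cover_X FF_A (eq_leq (subnKC t_le_tauG)).
  rewrite subnKC ?t_le_tauG // in dim_S.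
  apply/bigcupP; exists S; rewrite // /above dim_S eqxx inE S_A iso_A dim_A.
  by rewrite dim_S subnKC ?tauG_le_m1 ?eqxx.
apply: le_trans (_ : (\sum_(S in tower X (tauG - t)) #|above S|)%N%:R <= _).
  by rewrite ler_nat (leq_trans (subset_leq_card FF_above)) ?card_bigcup_le.
rewrite natr_sum -dim_X.
apply: le_trans (_ : \sum_(S in tower X (tauG - t)) Nprime q tauG m1 nu <= _).
  apply: ler_sum => S _; rewrite /above; case: eqP => [dim_S | _]; last first.
    by rewrite cards0 Nprime_ge0.
  by rewrite -dim_S card_isotropic_extensions_le_Nprime // dim_S tauG_le_m1.
by rewrite sumr_const -mulr_natr mulrC ler_wpM2r ?Nprime_ge0 ?card_tower.
Qed.

End CrossIntersecting.

Unset Implicit Arguments.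

Theorem lemma2p3 (F : finFieldType) (nu m1 m2 t : nat)
    (f : 'rV[F]_(2 * nu) -> 'rV[F]_(2 * nu) -> F)
    (FF GG : {set VS F (2 * nu)}) :
  nondeg_alternating_bilinear_form f ->
  (0 < t)%N -> (t <= m1)%N -> (m1 < nu)%N -> (t <= m2)%N -> (m2 < nu)%N ->
  (2 * m1 + m2 - t <= 2 * nu)%N ->
  FF \subset Pm f m1 -> GG \subset Pm f m2 ->
  FF != set0 -> GG != set0 ->
  cross_t_intersecting t FF GG ->
  (#|FF|%:R : rat) <=
    gauss #|F| (tau f t FF) t
    * gauss #|F| (m2 - t + 1) 1 ^+ (tau f t GG - t)
    * Nprime #|F| (tau f t GG) m1 nu.
Proof.
move=> [f_bilinear _ f_nondeg] _ _ lt_m1_nu le_t_m2 _ _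
  FF_sub GG_sub FF_neq0 GG_neq0 cross.
exact: card_FF_le FF_sub GG_sub FF_neq0 GG_neq0 cross le_t_m2
  (ltnW lt_m1_nu) f_bilinear f_nondeg.
Qed.
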